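(* Let $p\ge2$ and consider the dynamic panel logit AR($p$) model with $T=3$: binary outcomes $Y_{1-p},\dots,Y_0,Y_1,Y_2,Y_3\in\{0,1\}$, regressors $X=(X_1,X_2,X_3)\in\mathbb{R}^{K\times3}$, fixed effect $A\in\mathbb{R}$, with, for $t\in\{1,2,3\}$, $$\Pr(Y_t=1\mid Y_{1-p},\dots,Y_{t-1},X,A)=\frac{\exp(X_t'\beta_0+\sum_{\ell=1}^pY_{t-\ell}\gamma_{0,\ell}+A)}{1+\exp(X_t'\beta_0+\sum_{\ell=1}^pY_{t-\ell}\gamma_{0,\ell}+A)}$$ and true parameters $\beta_0\in\mathbb{R}^K$, $\gamma_0\in\mathbb{R}^p$. Let $Y^{(0)}=(Y_{1-p},\dots,Y_0)$, let $0_r$ and $1_r$ denote the $r$-vectors of zeros and ones, and let $x_{ts}=x_t-x_s$. For $y=(y_1,y_2,y_3)$ define $$m_{(0_p)}=\begin{cases}e^{x_{12}'\beta}&y=(0,1,0),\\ e^{x_{12}'\beta-\gamma_1}&y=(0,1,1),\\ -1&(y_1,y_2)=(1,0),\\0&\text{otherwise},\end{cases}\qquad m_{(0,1_{p-1})}=\begin{cases}-1&(y_1,y_2)=(0,1),\\ e^{x_{21}'\beta-\gamma_1+\gamma_p}&y=(1,0,0),\\ e^{x_{21}'\beta+\gamma_p}&y=(1,0,1),\\0&\text{otherwise},\end{cases}$$ $$m_{(1,0_{p-1})}=\begin{cases}e^{x_{12}'\beta+\gamma_p}&y=(0,1,0),\\ e^{x_{12}'\beta-\gamma_1+\gamma_p}&y=(0,1,1),\\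 -1&(y_1,y_2)=(1,0),\\0&\text{otherwise},\end{cases}\qquad m_{(1_p)}=\begin{cases}-1&(y_1,y_2)=(0,1),\\ e^{x_{21}'\beta-\gamma_1}&y=(1,0,0),\\ e^{x_{21}'\beta}&y=(1,0,1),\\0&\text{otherwise},\end{cases}$$ as functions of $(y,x,\beta,\gamma)$. Then for all $y^{(0)}\in\{0_p,(0,1_{p-1}),(1,0_{p-1}),1_p\}$, $(x_1,x_2)\in\mathbb{R}^{K\times2}$ and $\alpha\in\mathbb{R}$, $$\mathbb{E}\big[m_{y^{(0)}}(Y,X,\beta_0,\gamma_0)\mid Y^{(0)}=y^{(0)},X=(x_1,x_2,x_2),A=\alpha\big]=0,$$ where $Y=(Y_1,Y_2,Y_3)$.
   Context: The joint distribution of $(Y^{(0)},X,A)$ is unrestricted; only the conditional law of $(Y_1,Y_2,Y_3)$ given $(Y^{(0)},X,A)$ is specified by the model. The vector $(0,1_{p-1})$ has first entry (corresponding to $Y_{1-p}$) equal to $0$ and all others equal to $1$; similarly for $(1,0_{p-1})$. *)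

From Stdlib Require Import Reals List.
Import ListNotations.
Open Scope R_scope.

(* Vectors in R^K are functions nat -> R (entries 0..K-1 used). *)
Fixpoint dot (K : nat) (u v : nat -> R) : R :=
  match K with O => 0 | S k => dot k u v + u k * v k end.

Fixpoint sum1 (n : nat) (f : nat -> R) : R :=
  match n with O => 0 | S k => sum1 k f + f (S k) end.

Definition b2r (b : bool) : R := if b then 1 else 0.

Definition Lambda (z : R) : R := exp z / (1 + exp z).

(* Full outcome history indexed by position i: position i holds Y_{i+1-p}.
   So y0 i = Y_{1-p+i} for i < p, and Y_t (t = 1,2,3) sits at position p-1+t. *)
Definition hist (p : nat) (y0 : nat -> bool) (y1 y2 y3 : bool) (i : nat) : bool :=
  if Nat.ltb i p then y0 i
  else if Nat.eqb i p then y1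
  else if Nat.eqb i (S p) then y2 else y3.

(* sum_{l=1}^p Y_{t-l} gamma_l  (gamma indexed 1..p) *)
Definition lagsum (p : nat) (gamma : nat -> R) (h : nat -> bool) (t : nat) : R :=
  sum1 p (fun l => b2r (h (p + t - 1 - l)%nat) * gamma l).

Definition lindex (p K : nat) (beta gamma : nat -> R) (h : nat -> bool)
  (x : nat -> nat -> R) (alpha : R) (t : nat) : R :=
  dot K (x t) beta + lagsum p gamma h t + alpha.

Definition pr_t (p K : nat) (beta gamma : nat -> R) (h : nat -> bool)
  (x : nat -> nat -> R) (alpha : R) (t : nat) (yt : bool) : R :=
  let L := Lambda (lindex p K beta gamma h x alpha t) in
  if yt then L else 1 - L.

Definition condprob (p K : nat) (beta gamma : nat -> R) (y0 : nat -> bool)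
  (x : nat -> nat -> R) (alpha : R) (y1 y2 y3 : bool) : R :=
  let h := hist p y0 y1 y2 y3 in
  pr_t p K beta gamma h x alpha 1 y1 *
  pr_t p K beta gamma h x alpha 2 y2 *
  pr_t p K beta gamma h x alpha 3 y3.

Definition bools : list bool := true :: false :: nil.

Definition condexp (p K : nat) (beta gamma : nat -> R) (y0 : nat -> bool)
  (x : nat -> nat -> R) (alpha : R) (m : bool -> bool -> bool -> R) : R :=
  fold_right Rplus 0 (map (fun y1 =>
  fold_right Rplus 0 (map (fun y2 =>
  fold_right Rplus 0 (map (fun y3 =>
    m y1 y2 y3 * condprob p K beta gamma y0 x alpha y1 y2 y3) bools)) bools)) bools).

Inductive init := I0p | I01 | I10 | I1p.

Definition y0_of (c : init) : nat -> bool :=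
  match c with
  | I0p => fun _ => false
  | I01 => fun i => negb (Nat.eqb i 0)
  | I10 => fun i => Nat.eqb i 0
  | I1p => fun _ => true
  end.

Definition mfun (c : init) (p K : nat) (x : nat -> nat -> R) (beta gamma : nat -> R)
  (y1 y2 y3 : bool) : R :=
  let x12 := dot K (x 1%nat) beta - dot K (x 2%nat) beta in
  let x21 := dot K (x 2%nat) beta - dot K (x 1%nat) beta in
  let g1 := gamma 1%nat in
  let gp := gamma p in
  match c with
  | I0p => match y1, y2, y3 with
           | false, true, false => exp x12
           | false, true, true => exp (x12 - g1)
           | true, false, _ => -1
           | _, _, _ => 0 end
  | I01 => match y1, y2, y3 with
           | false, true, _ => -1
           | true, false, false => exp (x21 - g1 + gp)
           | true, false, true => exp (x21 + gp)
           | _, _, _ => 0 end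
  | I10 => match y1, y2, y3 with
           | false, true, false => exp (x12 + gp)
           | false, true, true => exp (x12 - g1 + gp)
           | true, false, _ => -1
           | _, _, _ => 0 end
  | I1p => match y1, y2, y3 with
           | false, true, _ => -1
           | true, false, false => exp (x21 - g1)
           | true, false, true => exp x21
           | _, _, _ => 0 end
  end.

Definition Xstay (x1 x2 : nat -> R) : nat -> nat -> R :=
  fun t => if Nat.eqb t 1 then x1 else x2.

(* For a fixed initial condition, the three logit indices depend only on
   (Y_1, Y_2), and since X_2 = X_3 the period-3 index after the switch (0,1)
   equals the period-2 index after Y_1 = 1 (after (1,0): the one after
   Y_1 = 0).  With the odds identity Lambda z = e^z (1 - Lambda z), the
   weights exp (+-(z_2 - z_1)) in m then turn the probability of one switch
   into that of the other, and the two cancel.  Relabelling 0 <-> 1 while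
   negating every index preserves the model and exchanges the two kinds of
   switch, so a single identity covers all four initial conditions. *)
From Stdlib Require Import Reals Lia Lra.
Open Scope R_scope.

Lemma sum1_ext n f g :
  (forall l, (1 <= l <= n)%nat -> f l = g l) -> sum1 n f = sum1 n g.
Proof.
  induction n as [|n IH]; intros Hfg; simpl; [reflexivity|].
  rewrite IH by (intros; apply Hfg; lia).
  rewrite (Hfg (S n)) by lia; reflexivity.
Qed.

Lemma sum1_scal n k f : sum1 n (fun l => k * f l) = k * sum1 n f.
Proof. induction n as [|n IH]; simpl; [ring|]. rewrite IH; ring. Qed.

Lemma sum1_first n f :
  (0 < n)%nat -> sum1 n f = f 1%nat + sum1 (n - 1) (fun l => f (S l)).
Proof.
  intros Hn; destruct n as [|n]; [lia|]; rewrite Nat.sub_succ, Nat.sub_0_r.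
  induction n as [|n IH]; simpl in *; [ring|]. rewrite IH by lia; ring.
Qed.

Lemma sum1_last n f : (0 < n)%nat -> sum1 n f = sum1 (n - 1) f + f n.
Proof. intros Hn; destruct n as [|n]; [lia|]; simpl; rewrite Nat.sub_0_r; reflexivity. Qed.

Lemma hist_init p y0 y1 y2 y3 i : (i < p)%nat -> hist p y0 y1 y2 y3 i = y0 i.
Proof. intros Hi; unfold hist; destruct (Nat.ltb_spec i p); [reflexivity | lia]. Qed.

Lemma hist_p p y0 y1 y2 y3 : hist p y0 y1 y2 y3 p = y1.
Proof. unfold hist; rewrite Nat.ltb_irrefl, Nat.eqb_refl; reflexivity. Qed.

Lemma hist_Sp p y0 y1 y2 y3 : hist p y0 y1 y2 y3 (S p) = y2.
Proof.
  unfold hist; destruct (Nat.ltb_spec (S p) p); [lia|].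
  destruct (Nat.eqb_spec (S p) p); [lia|].
  rewrite Nat.eqb_refl; reflexivity.
Qed.

Section LagSums.

Variables (p : nat) (g : nat -> R) (y0 : nat -> bool) (v : bool).
Hypothesis p_ge2 : (2 <= p)%nat.
Hypothesis y0_tail : forall i, (1 <= i < p)%nat -> y0 i = v.

Lemma sum1_hist_tail n (pos : nat -> nat) (f : nat -> R) y1 y2 y3 :
  (forall l, (1 <= l <= n)%nat -> (1 <= pos l < p)%nat) ->
  sum1 n (fun l => b2r (hist p y0 y1 y2 y3 (pos l)) * f l) = b2r v * sum1 n f.
Proof.
  intros Hpos; rewrite <- sum1_scal; apply sum1_ext; intros l Hl.
  rewrite hist_init, y0_tail; auto; apply Hpos; lia.
Qed.

Lemma lagsum_hist_1 y1 y2 y3 :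
  lagsum p g (hist p y0 y1 y2 y3) 1 = b2r (y0 0%nat) * g p + b2r v * (sum1 p g - g p).
Proof.
  unfold lagsum; rewrite !(sum1_last p) by lia.
  rewrite (sum1_hist_tail (p - 1) (fun l => p + 1 - 1 - l)%nat g) by lia.
  replace (p + 1 - 1 - p)%nat with 0%nat by lia.
  rewrite hist_init by lia; ring.
Qed.

Lemma lagsum_hist_2 y1 y2 y3 :
  lagsum p g (hist p y0 y1 y2 y3) 2 = b2r y1 * g 1%nat + b2r v * (sum1 p g - g 1%nat).
Proof.
  unfold lagsum; rewrite !(sum1_first p) by lia.
  rewrite (sum1_hist_tail (p - 1) (fun l => p + 2 - 1 - S l)%nat (fun l => g (S l)))
    by lia.
  replace (p + 2 - 1 - 1)%nat with p by lia.
  rewrite hist_p; ring.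
Qed.

Lemma lagsum_hist_3 y1 y2 y3 :
  lagsum p g (hist p y0 y1 y2 y3) 3
  = b2r y2 * g 1%nat + b2r y1 * g 2%nat + b2r v * (sum1 p g - g 1%nat - g 2%nat).
Proof.
  unfold lagsum; rewrite !(sum1_first p), !(sum1_first (p - 1)) by lia.
  rewrite (sum1_hist_tail (p - 1 - 1) (fun l => p + 3 - 1 - S (S l))%nat
             (fun l => g (S (S l)))) by lia.
  replace (p + 3 - 1 - 1)%nat with (S p) by lia.
  replace (p + 3 - 1 - 2)%nat with p by lia.
  rewrite hist_Sp, hist_p; ring.
Qed.

End LagSums.

Definition bern (q : R) (y : bool) : R := if y then q else 1 - q.

Definition seqprob (z1 : R) (z2 : bool -> R) (z3 : bool -> bool -> R)
  (y1 y2 y3 : bool) : R :=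
  bern (Lambda z1) y1 * bern (Lambda (z2 y1)) y2 * bern (Lambda (z3 y1 y2)) y3.

Definition sum_bool (f : bool -> R) : R := f true + f false.

Definition sum3 (F : bool -> bool -> bool -> R) : R :=
  sum_bool (fun y1 => sum_bool (fun y2 => sum_bool (fun y3 => F y1 y2 y3))).

Lemma sum3_negb F : sum3 F = sum3 (fun y1 y2 y3 => F (negb y1) (negb y2) (negb y3)).
Proof. unfold sum3, sum_bool; simpl; ring. Qed.

Lemma Lambda_opp z : Lambda (- z) = 1 - Lambda z.
Proof.
  unfold Lambda; rewrite exp_Ropp.
  pose proof (exp_pos z); field; split; lra.
Qed.

Lemma bern_Lambda_negb z y : bern (Lambda z) (negb y) = bern (Lambda (- z)) y.
Proof. destruct y; simpl; rewrite Lambda_opp; ring. Qed.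

Lemma seqprob_negb z1 z2 z3 y1 y2 y3 :
  seqprob z1 z2 z3 (negb y1) (negb y2) (negb y3)
  = seqprob (- z1) (fun y1 => - z2 (negb y1)) (fun y1 y2 => - z3 (negb y1) (negb y2))
      y1 y2 y3.
Proof. unfold seqprob; rewrite !bern_Lambda_negb; reflexivity. Qed.

Lemma sum3_ext F G :
  (forall y1 y2 y3, F y1 y2 y3 = G y1 y2 y3) -> sum3 F = sum3 G.
Proof. intros FG; unfold sum3, sum_bool; rewrite !FG; reflexivity. Qed.

Lemma Lambda_switch z u u' :
  exp (z - u) * ((1 - Lambda z) * Lambda u * (1 - Lambda u'))
  + exp (z - u') * ((1 - Lambda z) * Lambda u * Lambda u')
  = Lambda z * (1 - Lambda u').
Proof.
  unfold Lambda, Rminus; rewrite !exp_plus, !exp_Ropp.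
  pose proof (exp_pos z); pose proof (exp_pos u); pose proof (exp_pos u').
  field; repeat split; lra.
Qed.

Lemma moment_switch_up z1 z2 z3 (m : bool -> bool -> bool -> R) :
  z3 false true = z2 true ->
  (forall y y3, m y y y3 = 0) ->
  (forall y3, m true false y3 = -1) ->
  m false true false = exp (z1 - z2 false) ->
  m false true true = exp (z1 - z2 true) ->
  sum3 (fun y1 y2 y3 => m y1 y2 y3 * seqprob z1 z2 z3 y1 y2 y3) = 0.
Proof.
  intros Hz3 Hstay H10 H010 H011.
  pose proof (Lambda_switch z1 (z2 false) (z2 true)) as Hkey.
  unfold sum3, sum_bool, seqprob, bern.
  rewrite !Hstay, !H10, H010, H011, Hz3.
  lra.
Qed.

Lemma moment_switch_down z1 z2 z3 (m : bool -> bool -> bool -> R) :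
  z3 true false = z2 false ->
  (forall y y3, m y y y3 = 0) ->
  (forall y3, m false true y3 = -1) ->
  m true false false = exp (z2 false - z1) ->
  m true false true = exp (z2 true - z1) ->
  sum3 (fun y1 y2 y3 => m y1 y2 y3 * seqprob z1 z2 z3 y1 y2 y3) = 0.
Proof.
  intros Hz3 Hstay H01 H100 H101.
  rewrite sum3_negb.
  erewrite sum3_ext by (intros; rewrite seqprob_negb; reflexivity).
  apply moment_switch_up; simpl.
  - rewrite Hz3; reflexivity.
  - intros y y3; apply Hstay.
  - intros y3; apply H01.
  - rewrite H101; f_equal; ring.
  - rewrite H100; f_equal; ring.
Qed.

Lemma condexp_sum3 p K beta gamma y0 x alpha m :
  condexp p K beta gamma y0 x alpha m
  = sum3 (fun y1 y2 y3 => m y1 y2 y3 * condprob p K beta gamma y0 x alpha y1 y2 y3).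
Proof. unfold condexp, sum3, sum_bool; cbn [bools List.map List.fold_right]; ring. Qed.

Lemma condprob_Xstay p K beta gamma y0 (v : bool) x1 x2 alpha y1 y2 y3 :
  (2 <= p)%nat -> (forall i, (1 <= i < p)%nat -> y0 i = v) ->
  condprob p K beta gamma y0 (Xstay x1 x2) alpha y1 y2 y3
  = seqprob
      (dot K x1 beta + (b2r (y0 0%nat) * gamma p + b2r v * (sum1 p gamma - gamma p)) + alpha)
      (fun y1 => dot K x2 beta
                 + (b2r y1 * gamma 1%nat + b2r v * (sum1 p gamma - gamma 1%nat)) + alpha)
      (fun y1 y2 => dot K x2 beta
                    + (b2r y2 * gamma 1%nat + b2r y1 * gamma 2%nat
                       + b2r v * (sum1 p gamma - gamma 1%nat - gamma 2%nat)) + alpha)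
      y1 y2 y3.
Proof.
  intros hp Htail; unfold condprob, pr_t, lindex.
  rewrite (lagsum_hist_1 p gamma y0 v), (lagsum_hist_2 p gamma y0 v),
    (lagsum_hist_3 p gamma y0 v) by assumption.
  reflexivity.
Qed.

Definition tail_of (c : init) : bool :=
  match c with I0p | I10 => false | I01 | I1p => true end.

Lemma y0_of_tail c i : (1 <= i)%nat -> y0_of c i = tail_of c.
Proof. intros Hi; destruct c, i; simpl; reflexivity || lia. Qed.

Theorem lemma5 (p K : nat) (hp : (2 <= p)%nat) (beta0 gamma0 : nat -> R)
  (c : init) (x1 x2 : nat -> R) (alpha : R) :
  condexp p K beta0 gamma0 (y0_of c) (Xstay x1 x2) alpha
    (fun y1 y2 y3 => mfun c p K (Xstay x1 x2) beta0 gamma0 y1 y2 y3) = 0.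
Proof.
  rewrite condexp_sum3.
  erewrite sum3_ext by (intros; rewrite (condprob_Xstay _ _ _ _ _ (tail_of c)) by
    (assumption || (intros; apply y0_of_tail; lia)); reflexivity).
  destruct c; cbn [y0_of tail_of];
    [apply moment_switch_up | apply moment_switch_down
    | apply moment_switch_up | apply moment_switch_down].
  all: try (intros [] []; reflexivity); try (intros []; reflexivity).
  all: cbn; (ring || (f_equal; ring)).
Qed.
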